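(* Let $\varepsilon>0$ and $\mathcal{K}_\varepsilon=\{x\in\mathbb{R}^{|\mathcal{A}|}:x_i+\varepsilon\le x_{i+1}\text{ for }i=1,\dots,|\mathcal{A}|-1\}$. Consider the modification of MultiQT in which the forecast is $q_t=\Pi_{\mathcal{K}_\varepsilon}(b_t+\tilde\theta_t)$ and the hidden offsets are updated by $\tilde\theta_{t+1}^{\alpha}=\tilde\theta_t^{\alpha}-\eta(\mathbb{1}\{y_t\le q_t^{\alpha}\}-\alpha)$ for each $\alpha\in\mathcal{A}$. There exist a set of levels $\mathcal{A}$ and a sequence $(y_t,b_t)$ with $|y_t-b_t^{\alpha}|<R$ for all $\alpha,t$ (for some $R>0$) such that for some $\alpha\in\mathcal{A}$, $\lim_{T\to\infty}\frac1T\sum_{t=1}^T\mathbb{1}\{y_t\le q_t^{\alpha}\}\ne\alpha$.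
   Context: $\mathcal{A}=\{\alpha_1<\dots<\alpha_m\}\subset(0,1)$ is a set of quantile levels, $\eta>0$ a learning rate, base forecasts $b_t$ have nondecreasing entries, and $\Pi_C$ denotes Euclidean projection onto a closed convex set $C$. *)

From Stdlib Require Import Reals Lra.
Open Scope R_scope.

(* Vectors in R^m are represented as functions nat -> R, only indices i < m matter.
   Index i (0-based) corresponds to the (i+1)-th smallest level alpha_{i+1}. *)

Fixpoint sumR (m : nat) (f : nat -> R) : R :=
  match m with
  | O => 0
  | S k => sumR k f + f k
  end.

Definition sqdist (m : nat) (x y : nat -> R) : R :=
  sumR m (fun i => (x i - y i) ^ 2).

Definition in_Keps (m : nat) (eps : R) (x : nat -> R) : Prop :=
  forall i : nat, (i + 1 < m)%nat -> x i + eps <= x (i + 1)%nat.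

(* p is the Euclidean projection of v onto K_eps (the projection exists and
   is unique since K_eps is nonempty closed convex). *)
Definition is_proj_Keps (m : nat) (eps : R) (v p : nat -> R) : Prop :=
  in_Keps m eps p /\
  forall z : nat -> R, in_Keps m eps z -> sqdist m p v <= sqdist m z v.

Definition ind_le (a b : R) : R := if Rle_dec a b then 1 else 0.

(* empirical coverage (1/T) sum_{t=1}^T 1{y_t <= q_t^alpha}; times are 0-based,
   so the average over the first T+1 rounds is indexed by T. *)
Definition coverage (y : nat -> R) (q : nat -> nat -> R) (i : nat) (T : nat) : R :=
  sum_f_R0 (fun t => ind_le (y t) (q t i)) T / INR (S T).

(** Take two levels 1/4 < 3/4, [y_t = 0] and [b_t = 0].  Starting from zero
    offsets, the first forecast is the projection of [(0, 0)], namely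
    [(-eps/2, eps/2)]: level 1/4 is not covered and level 3/4 is, so the
    offsets move to [(eta/4, -eta/4)].  Inductively the offsets are
    [(a_t, -a_t)] with [a_t = t eta / 4 >= 0]; such a point violates the
    ordering constraint, and its projection only depends on the (zero) sum of
    its coordinates, so the forecast stays at [(-eps/2, eps/2)] forever.  The
    level 1/4 is therefore never covered and its empirical coverage is 0. *)

From Stdlib Require Import Reals Lra Lia.
Open Scope R_scope.

Lemma is_proj_Keps_2_active (eps : R) (v q : nat -> R) :
  v 1%nat - v 0%nat <= eps -> is_proj_Keps 2 eps v q ->
  q 0%nat = (v 0%nat + v 1%nat - eps) / 2 /\ q 1%nat = (v 0%nat + v 1%nat + eps) / 2.
Proof.
  intros Hactive [HK Hmin].
  assert (Hgap : q 0%nat + eps <= q 1%nat) by (apply (HK 0%nat); lia).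
  set (z := fun i : nat => match i with
                           | O => (v 0%nat + v 1%nat - eps) / 2
                           | _ => (v 0%nat + v 1%nat + eps) / 2 end).
  assert (Hz : in_Keps 2 eps z).
  { intros [|i] Hi; [simpl; lra | lia]. }
  specialize (Hmin z Hz); unfold sqdist in Hmin; simpl in Hmin.
  (* In the coordinates sum/gap, [sqdist] is [(s^2 + d^2) / 2] and [z] attains [d = k]. *)
  set (s := q 0%nat + q 1%nat - (v 0%nat + v 1%nat)).
  set (d := q 1%nat - q 0%nat - (v 1%nat - v 0%nat)).
  set (k := eps - (v 1%nat - v 0%nat)).
  assert (Hk : 0 <= k) by (unfold k; lra).
  assert (Hdk : k <= d) by (unfold d, k; lra).
  assert (Hsd : s ^ 2 + d ^ 2 <= k ^ 2).
  { unfold s, d, k. simpl in Hmin |- *. nra. }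
  assert (Hdk2 : k ^ 2 <= d ^ 2) by nra.
  assert (Hs : s = 0) by nra.
  assert (Hd : d = k) by nra.
  unfold s, d, k in *. split; lra.
Qed.

Lemma sumR_ext (m : nat) (f g : nat -> R) :
  (forall i, (i < m)%nat -> f i = g i) -> sumR m f = sumR m g.
Proof.
  induction m as [|m IH]; intros Hfg; simpl; [reflexivity|].
  rewrite IH, Hfg; [reflexivity | lia | intros i Hi; apply Hfg; lia].
Qed.

Lemma is_proj_Keps_ext (m : nat) (eps : R) (v w p : nat -> R) :
  (forall i, v i = w i) -> is_proj_Keps m eps v p -> is_proj_Keps m eps w p.
Proof.
  intros Hvw [HK Hmin]. split; [exact HK|]. intros z Hz.
  assert (Hsq : forall x, sqdist m x v = sqdist m x w).
  { intros x. apply sumR_ext. intros i _. rewrite Hvw. reflexivity. }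
  rewrite <- !Hsq. exact (Hmin z Hz).
Qed.

Lemma Un_cv_const_limit (u : nat -> R) (c l : R) :
  (forall n, u n = c) -> Un_cv u l -> l = c.
Proof.
  intros Hu Hl. apply (UL_sequence u); [exact Hl|].
  intros e He. exists O. intros n _. rewrite Hu. unfold R_dist.
  rewrite Rminus_diag, Rabs_R0. exact He.
Qed.

Lemma coverage_never_covered (y : nat -> R) (q : nat -> nat -> R) (i : nat) :
  (forall t, q t i < y t) -> forall T, coverage y q i T = 0.
Proof.
  intros Hmiss T. unfold coverage. rewrite sum_eq_R0; [unfold Rdiv; ring|].
  intros t _. unfold ind_le. destruct (Rle_dec (y t) (q t i)) as [Hle|]; [|reflexivity].
  specialize (Hmiss t). lra.
Qed.

Definition levels (i : nat) : R := match i with O => 1 / 4 | _ => 3 / 4 end.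

Section ZeroRun.

Variables (eps eta : R) (theta q : nat -> nat -> R).
Hypotheses (Heps : 0 < eps) (Heta : 0 < eta).
Hypothesis theta_init : forall i, theta O i = 0.
Hypothesis q_proj : forall t, is_proj_Keps 2 eps (theta t) (q t).
Hypothesis theta_step :
  forall t i, theta (S t) i = theta t i - eta * (ind_le 0 (q t i) - levels i).

Lemma zero_run_forecast (t : nat) (a : R) :
  0 <= a -> theta t 0%nat = a -> theta t 1%nat = - a ->
  q t 0%nat = - eps / 2 /\ q t 1%nat = eps / 2.
Proof.
  intros Ha H0 H1.
  destruct (is_proj_Keps_2_active eps _ _ ltac:(rewrite H0, H1; lra) (q_proj t))
    as [Q0 Q1].
  rewrite H0, H1 in Q0, Q1. split; lra.
Qed.

Lemma zero_run_offsets (t : nat) :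
  theta t 0%nat = INR t * eta / 4 /\ theta t 1%nat = - (INR t * eta / 4).
Proof.
  induction t as [|t [IH0 IH1]].
  - rewrite !theta_init. simpl. split; lra.
  - assert (Ha : 0 <= INR t * eta / 4) by (pose proof (pos_INR t); nra).
    destruct (zero_run_forecast t _ Ha IH0 IH1) as [Q0 Q1].
    rewrite !theta_step, IH0, IH1, Q0, Q1, S_INR. unfold ind_le, levels.
    destruct (Rle_dec 0 (- eps / 2)); [lra|].
    destruct (Rle_dec 0 (eps / 2)); [|lra].
    split; lra.
Qed.

Lemma zero_run_misses_first_level (t : nat) : q t 0%nat < 0.
Proof.
  assert (Ha : 0 <= INR t * eta / 4) by (pose proof (pos_INR t); nra).
  destruct (zero_run_offsets t) as [H0 H1].
  destruct (zero_run_forecast t _ Ha H0 H1) as [Q0 _].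
  lra.
Qed.

End ZeroRun.

Theorem proposition14 :
  forall (eps eta : R), 0 < eps -> 0 < eta ->
  exists (m : nat) (alpha : nat -> R) (y : nat -> R) (b : nat -> nat -> R) (R0 : R),
    (1 <= m)%nat /\
    (* levels alpha_0 < ... < alpha_{m-1} in (0,1) *)
    (forall i, (i < m)%nat -> 0 < alpha i < 1) /\
    (forall i, (i + 1 < m)%nat -> alpha i < alpha (i + 1)%nat) /\
    (* base forecasts have nondecreasing entries *)
    (forall t i, (i + 1 < m)%nat -> b t i <= b t (i + 1)%nat) /\
    (* boundedness *)
    0 < R0 /\
    (forall t i, (i < m)%nat -> Rabs (y t - b t i) < R0) /\
    (* for every run of the modified MultiQT (initial hidden offsets 0) *)
    forall (theta q : nat -> nat -> R),
      (forall i, theta O i = 0) ->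
      (forall t, is_proj_Keps m eps (fun i => b t i + theta t i) (q t)) ->
      (forall t i, theta (S t) i = theta t i - eta * (ind_le (y t) (q t i) - alpha i)) ->
      exists i, (i < m)%nat /\ ~ Un_cv (coverage y q i) (alpha i).
Proof.
  intros eps eta Heps Heta.
  exists 2%nat, levels, (fun _ => 0), (fun _ _ => 0), 1.
  split; [lia|]. split; [intros [|[|]] ?; simpl; lra || lia|].
  split; [intros [|] ?; simpl; lra || lia|].
  split; [intros; lra|]. split; [lra|].
  split; [intros; rewrite Rminus_0_r, Rabs_R0; lra|].
  intros theta q Hinit Hproj Hstep. exists O. split; [lia|]. intros Hcv.
  assert (Hproj' : forall t, is_proj_Keps 2 eps (theta t) (q t)).
  { intros t. apply (is_proj_Keps_ext _ _ (fun i => 0 + theta t i)); [|exact (Hproj t)].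
    intros i. apply Rplus_0_l. }
  pose proof (zero_run_misses_first_level eps eta theta q Heps Heta Hinit Hproj' Hstep)
    as Hmiss.
  apply (Un_cv_const_limit _ 0) in Hcv; [simpl in Hcv; lra|].
  exact (coverage_never_covered _ _ _ Hmiss).
Qed.
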